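(* Let $G$ be a finite abelian group and let $\sigma_1,\sigma_2,\tau\in G$ be non-trivial elements with $o(\tau)>2$ and $\tau\in\langle\sigma_1,\sigma_2\rangle$. Then: (1) if $\mathrm{rank}\langle\sigma_1,\sigma_2\rangle=2$, there exist characters $\phi_1,\phi_2,\chi\in G^*$ such that (i) $\chi(\tau)\neq1$; (ii) $\phi_1(\sigma_1)\neq1$, $\phi_2(\sigma_2)\neq1$ and $\phi_1(\sigma_2)=\phi_2(\sigma_1)=1$; (iii) $\phi_1(\sigma_1)\chi(\sigma_1)\neq1$ and $\phi_2(\sigma_2)\overline{\chi}(\sigma_2)\neq1$. (2) If $\mathrm{rank}\langle\sigma_1,\sigma_2\rangle=1$, there exist characters $\phi,\chi\in G^*$ such that (i) $\chi(\tau)\neq1$; (ii) $\phi(\sigma_i)\neq1$ for $i=1,2$; (iii) $\phi(\sigma_i)\chi(\sigma_i)\neq1$ for $i=1,2$.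
   Context: $G^*$ is the group of characters $G\to\mathbb{C}^*$; $o(g)$ is the order of $g$; the rank of an abelian group is the minimal number of its generators. *)

From mathcomp Require Import all_boot all_order all_algebra all_fingroup all_solvable all_field all_character.
Set Implicit Arguments. Unset Strict Implicit. Unset Printing Implicit Defensive.

Definition gen_rank_is (gT : finGroupType) (H : {set gT}) (n : nat) : Prop :=
  (exists s : seq gT, size s = n /\ <<[set x in s]>>%g = H) /\
  (forall s : seq gT, <<[set x in s]>>%g = H -> (n <= size s)%N).

From mathcomp Require Import all_boot all_order all_algebra all_fingroup all_solvable all_field all_character.
Import GRing.Theory Num.Theory.
Local Open Scope ring_scope.
Set Implicit Arguments. Unset Strict Implicit. Unset Printing Implicit Defensive.

(* The linear characters of a finite abelian group separate its points and
   extend from any subgroup.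

   In rank 2, s1 lies outside the cyclic group of s2 and vice versa, so there
   are linear phi1, phi2 with phi1 s1 != 1 = phi1 s2 and phi2 s2 != 1 = phi2 s1.
   Start from chi with chi tau^2 != 1 and multiply it by phi_i whenever
   phi_i s_i = chi s_i = -1; as phi_i^2 is then trivial on <s1, s2>, this keeps
   chi tau^2 unchanged. Finally phi_i s_i * chi s_i = 1 can only happen when
   phi_i s_i != -1, and then phi_i^2 works instead of phi_i (with the
   conjugate of chi s2 in place of chi s2 when i = 2).

   In rank 1, <s1, s2> is cyclic, so some phi is faithful on it, and
   chi := phi^k works as soon as tau^k, s1^(k+1) and s2^(k+1) are all
   nontrivial; such a k exists because the order of tau exceeds 2. *)

Lemma exists_notdvd_shift (a b c : nat) : (1 < a)%N -> (1 < b)%N -> (2 < c)%N ->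
  exists k, [/\ ~~ (c %| k), ~~ (a %| k.+1) & ~~ (b %| k.+1)]%N.
Proof.
(* Take k = a * b or a * b - 2: a and b divide a * b, hence neither a * b + 1
   nor a * b - 1, while c > 2 cannot divide both a * b and a * b - 2. *)
move=> a_gt1 b_gt1 c_gt2; set m := (a * b)%N.
have m_gt1 : (1 < m)%N by rewrite (leq_trans a_gt1) // leq_pmulr // ltnW.
have ndvd_succ d : (1 < d)%N -> (d %| m)%N -> ~~ (d %| m.+1)%N.
  by move=> d_gt1 d_m; rewrite -addn1 dvdn_addr // dvdn1 gtn_eqF.
have ndvd_pred d : (1 < d)%N -> (d %| m)%N -> ~~ (d %| m.-1)%N.
  move=> d_gt1 d_m; apply: contraL d_gt1 => d_m1.
  by have := dvdn_sub d_m d_m1; rewrite -subn1 subKn ?(ltnW m_gt1) // dvdn1 => /eqP->.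
have a_m : (a %| m)%N := dvdn_mulr _ (dvdnn a).
have b_m : (b %| m)%N := dvdn_mull _ (dvdnn b).
have [c_m | c_nm] := boolP (c %| m)%N; last by exists m; rewrite c_nm !ndvd_succ.
exists m.-2; rewrite prednK ?ltn_predRL //.
split; [|exact: ndvd_pred..].
apply: contraL c_gt2 => c_m2; have := dvdn_sub c_m c_m2.
by rewrite -subn2 subKn // => /dvdn_leq c_le2; rewrite -leqNgt c_le2.
Qed.

Lemma exists_expr_neq1 (R : idomainType) (a c : R) :
  a != 1 -> (a = -1 -> c != -1) -> exists n, a ^+ n != 1 /\ a ^+ n * c != 1.
Proof.
move=> a_neq1 a_c.
have [ac1 | ac_neq1] := eqVneq (a * c) 1; last by exists 1%N; rewrite expr1.
exists 2%N; split; last by rewrite expr2 -mulrA ac1 mulr1.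
rewrite sqrf_eq1 negb_or a_neq1 /=; apply/eqP=> a_m1.
by move: ac1 (a_c a_m1); rewrite a_m1 mulN1r => <-; rewrite opprK eqxx.
Qed.

Lemma gen_rank1_cyclic (gT : finGroupType) (A : {set gT}) :
  gen_rank_is A 1 -> cyclic A.
Proof.
case=> [[s [size_s <-]] _]; case: s size_s => [|g []] // _.
apply/cyclicP; exists g.
by rewrite /cycle; congr <<_>>%g; apply/setP=> z; rewrite !inE.
Qed.

Lemma gen_rank2_notin_cycle (gT : finGroupType) (x y : gT) :
  gen_rank_is <<[set x; y]>>%g 2 -> x \notin <[y]>%g.
Proof.
case=> _ min2; apply/negP=> x_y.
suff /min2 : <<[set z in [:: y]]>>%g = <<[set x; y]>>%g by [].
have -> : [set z in [:: y]] = [set y] by apply/setP=> z; rewrite !inE.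
apply/eqP; rewrite eqEsubset genS ?subsetUr //=.
by rewrite gen_subG subUset !sub1set x_y cycle_id.
Qed.

Lemma in_cfker_lin_char (gT : finGroupType) (G : {group gT}) (xi : 'CF(G)) x :
  xi \is a linear_char -> x \in G -> (x \in cfker xi) = (xi x == 1).
Proof. by move=> xi_lin Gx; rewrite cfkerEchar ?lin_charW // inE Gx lin_char1. Qed.

Lemma lin_char_gen_eq1 (gT : finGroupType) (G : {group gT}) (xi : 'CF(G)) (A : {set gT}) :
  xi \is a linear_char -> A \subset G -> {in A, forall x, xi x = 1} ->
  {in <<A>>%g, forall x, xi x = 1}.
Proof.
move=> xi_lin sAG xiA.
have sAker : <<A>>%g \subset cfker xi.
  rewrite gen_subG; apply/subsetP=> x Ax.
  by rewrite in_cfker_lin_char ?(subsetP sAG) ?xiA.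
move=> x /(subsetP sAker) x_ker; apply/eqP.
by rewrite -in_cfker_lin_char // (subsetP (cfker_sub xi)).
Qed.

Lemma lin_char_neq1 (gT : finGroupType) (G : {group gT}) x :
  abelian G -> x \in G -> x != 1%g ->
  exists2 xi : 'CF(G), xi \is a linear_char & xi x != 1.
Proof.
move=> abG Gx ntx.
have [i x_notin_ker] : exists i, x \notin cfker 'chi[G]_i.
  apply/existsP; rewrite -negb_forall; apply: contra ntx => /forallP x_ker.
  by apply/eqP/set1gP; rewrite -(TI_cfker_irr G); apply/bigcapP=> i _.
have chi_lin : 'chi[G]_i \is a linear_char by apply/char_abelianP.
by exists 'chi_i; rewrite -?in_cfker_lin_char.
Qed.

Lemma lin_char_separates (gT : finGroupType) (G K : {group gT}) x :
  abelian G -> K \subset G -> x \in G -> x \notin K ->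
  exists2 xi : 'CF(G), xi \is a linear_char &
    xi x != 1 /\ {in K, forall y, xi y = 1}.
Proof.
move=> abG sKG Gx notKx.
have nsKG : (K <| G)%g by rewrite -sub_abelian_normal.
have nKx := subsetP (normal_norm nsKG) x Gx.
have [xi xi_lin xi_x] : exists2 xi : 'CF(G / K), xi \is a linear_char &
    xi (coset K x) != 1.
  apply: lin_char_neq1; rewrite ?quotient_abelian ?mem_quotient //.
  by apply: contra notKx => /eqP; apply: coset_idr.
exists (xi %% K)%CF; first exact: cfMod_lin_char.
split=> [|y Ky]; first by rewrite cfModE.
by rewrite cfModE ?(subsetP sKG) // coset_id // lin_char1.
Qed.

Lemma lin_char_extend (gT : finGroupType) (G H : {group gT}) (lam : 'CF(H)) :
  abelian G -> H \subset G -> lam \is a linear_char ->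
  exists2 xi : 'CF(G), xi \is a linear_char & {in H, forall x, xi x = lam x}.
Proof.
move=> abG sHG /lin_char_irr/irrP[j ->].
have [i i_Ind] : exists i, i \in irr_constt ('Ind[G] 'chi[H]_j).
  by apply: neq0_has_constt; rewrite cfInd_eq0 ?irr_char ?irr_neq0.
have chi_lin : 'chi[G]_i \is a linear_char by apply/char_abelianP.
have /irrP[k Dk] := lin_char_irr (cfRes_lin_char H chi_lin).
exists 'chi_i => // x Hx.
move: i_Ind; rewrite constt_Ind_Res Dk constt_irr inE => /eqP->.
by rewrite -Dk cfResE.
Qed.

Lemma cyclic_faithful_lin_char (gT : finGroupType) (H : {group gT}) :
  cyclic H -> exists2 xi : 'CF(H), xi \is a linear_char & cfaithful xi.
Proof.
move=> cycH; have [g defH] := cyclicP cycH.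
have Hg : g \in H by rewrite defH cycle_id.
have [L [cF [cF_inj _ cF_lin cF_onto] [_ cF_mul _ _ cF_order]]] :=
  lin_char_group H.
have abL : abelian [set: L].
  by apply/centsP=> u _ v _; apply: cF_inj; rewrite !cF_mul mulrC.
have [u _ exp_u] := exponent_witness (abelian_nil abL).
(* every linear character has order dividing #[u], so g ^+ #[u] lies in all kernels *)
have g_u : (g ^+ #[u]%g)%g = 1%g.
  apply/set1gP; rewrite -(TI_cfker_irr H); apply/bigcapP=> i _.
  have [v ->] := cF_onto _ (irr_cyclic_lin i cycH).
  rewrite in_cfker_lin_char ?groupX // lin_charX //.
  have : (#[cF v]%CF %| #[u]%g)%N.
    by rewrite cF_order -exp_u order_dvdn expg_exponent ?inE.
  by move/dvdn_cforderP=> /(_ g Hg) ->.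
exists (cF u) => //; set K := cfker (cF u).
have H_dvd_u : (#|H| %| #[u]%g)%N by rewrite defH -orderE order_dvdn g_u.
have H_dvd_index : (#|H| %| #|H : K|%g)%N.
  rewrite -card_quotient ?cfker_norm // (dvdn_trans H_dvd_u) // -cF_order.
  by rewrite cforder_lin_char ?exponent_dvdn.
rewrite cfaithfulE subG1 trivg_card_le1 -(leq_pmul2r (indexg_gt0 H K)) mul1n.
by rewrite (Lagrange (cfker_sub _)) dvdn_leq.
Qed.

Lemma lin_char_faithful_on_cyclic (gT : finGroupType) (G H : {group gT}) :
  abelian G -> H \subset G -> cyclic H ->
  exists2 phi : 'CF(G), phi \is a linear_char &
    {in H, forall x, phi x = 1 -> x = 1%g}.
Proof.
move=> abG sHG /cyclic_faithful_lin_char[lam lam_lin lam_faithful].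
have [phi phi_lin phi_lam] := lin_char_extend abG sHG lam_lin.
exists phi => // x Hx; rewrite phi_lam // => lam_x.
apply/set1gP/(subsetP lam_faithful).
by rewrite in_cfker_lin_char // lam_x.
Qed.

Lemma lin_char_twist (gT : finGroupType) (G : {group gT}) (chi phi : 'CF(G)) x y t :
  chi \is a linear_char -> phi \is a linear_char -> x \in G -> y \in G ->
  t \in <<[set x; y]>>%g -> phi y = 1 ->
  exists2 chi' : 'CF(G), chi' \is a linear_char &
    [/\ chi' t ^+ 2 = chi t ^+ 2, chi' y = chi y & phi x = -1 -> chi' x != -1].
Proof.
move=> chi_lin phi_lin Gx Gy Ht phi_y.
have [phi_x | phi_nx] := eqVneq (phi x) (-1); last first.
  by exists chi => //; split=> // /eqP; rewrite (negPf phi_nx).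
have [chi_x | chi_nx] := eqVneq (chi x) (-1); last by exists chi => //; split.
have sxyG : [set x; y] \subset G by rewrite subUset !sub1set Gx Gy.
have Gt : t \in G by apply: subsetP Ht; rewrite gen_subG.
have phi2_t : phi t ^+ 2 = 1.
  rewrite -exp_cfunE //; apply: lin_char_gen_eq1 Ht; rewrite ?rpredX //.
  by move=> z /set2P[]->; rewrite exp_cfunE // ?phi_x ?phi_y ?sqrrN expr1n.
exists (chi * phi); first by rewrite rpredM.
rewrite !cfunE exprMn phi2_t phi_y chi_x phi_x mulrNN !mulr1.
by split=> // _; rewrite -addr_eq0 -mulr2n pnatr_eq0.
Qed.

Lemma independent_pair_lin_chars (gT : finGroupType) (G : {group gT}) s1 s2 tau :
  abelian G -> s1 \in G -> s2 \in G -> s1 \notin <[s2]>%g -> s2 \notin <[s1]>%g ->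
  tau \in <<[set s1; s2]>>%g -> (2 < #[tau]%g)%N ->
  exists (phi1 phi2 chi : 'CF(G)),
    [/\ [/\ phi1 \is a linear_char, phi2 \is a linear_char & chi \is a linear_char],
        chi tau != 1,
        [/\ phi1 s1 != 1, phi2 s2 != 1, phi1 s2 = 1 & phi2 s1 = 1] &
        phi1 s1 * chi s1 != 1 /\ phi2 s2 * (chi s2)^* != 1].
Proof.
move=> abG Gs1 Gs2 s1_notin s2_notin Htau tau_gt2.
have sC1G : <[s1]>%g \subset G by rewrite cycle_subG.
have sC2G : <[s2]>%g \subset G by rewrite cycle_subG.
have [phi1 phi1_lin [phi1_s1 phi1_K]] := lin_char_separates abG sC2G Gs1 s1_notin.
have [phi2 phi2_lin [phi2_s2 phi2_K]] := lin_char_separates abG sC1G Gs2 s2_notin.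
have phi1_s2 : phi1 s2 = 1 by apply: phi1_K; apply: cycle_id.
have phi2_s1 : phi2 s1 = 1 by apply: phi2_K; apply: cycle_id.
have Gtau : tau \in G.
  by apply: subsetP Htau; rewrite gen_subG subUset !sub1set Gs1 Gs2.
have [chi0 chi0_lin chi0_tau2] : exists2 chi0 : 'CF(G),
    chi0 \is a linear_char & chi0 (tau ^+ 2)%g != 1.
  apply: lin_char_neq1; rewrite ?groupX -?order_dvdn //.
  by apply: contraL tau_gt2 => /dvdn_leq tau_le2; rewrite -leqNgt tau_le2.
have [chi1 chi1_lin [chi1_tau chi1_s2 chi1_s1]] :=
  lin_char_twist chi0_lin phi1_lin Gs1 Gs2 Htau phi1_s2.
rewrite setUC in Htau.
have [chi chi_lin [chi_tau chi_s1 chi_s2]] :=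
  lin_char_twist chi1_lin phi2_lin Gs2 Gs1 Htau phi2_s1.
have chi_s1' : phi1 s1 = -1 -> chi s1 != -1 by rewrite chi_s1.
have chi_s2' : phi2 s2 = -1 -> (chi s2)^* != -1.
  move/chi_s2; apply: contra => /eqP/(congr1 (fun z => z^*)).
  by rewrite conjCK rmorphN1 => ->.
have [n1 [phi1_s1n phi1_chi]] := exists_expr_neq1 phi1_s1 chi_s1'.
have [n2 [phi2_s2n phi2_chi]] := exists_expr_neq1 phi2_s2 chi_s2'.
exists (phi1 ^+ n1), (phi2 ^+ n2), chi; rewrite !rpredX //.
rewrite !exp_cfunE // phi1_s2 phi2_s1 !expr1n; split=> //.
apply: contraNneq chi0_tau2 => chi_tau1.
by rewrite lin_charX // -chi1_tau -chi_tau chi_tau1 expr1n.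
Qed.

Lemma cyclic_pair_lin_chars (gT : finGroupType) (G : {group gT}) s1 s2 tau :
  abelian G -> s1 \in G -> s2 \in G -> cyclic <<[set s1; s2]>>%g ->
  s1 != 1%g -> s2 != 1%g -> tau \in <<[set s1; s2]>>%g -> (2 < #[tau]%g)%N ->
  exists (phi chi : 'CF(G)),
    [/\ phi \is a linear_char, chi \is a linear_char,
        chi tau != 1,
        phi s1 != 1 /\ phi s2 != 1 &
        phi s1 * chi s1 != 1 /\ phi s2 * chi s2 != 1].
Proof.
move=> abG Gs1 Gs2 cycH s1_nt s2_nt Htau tau_gt2.
have sHG : <<[set s1; s2]>>%g \subset G.
  by rewrite gen_subG subUset !sub1set Gs1 Gs2.
have [phi phi_lin phi_faithful] := lin_char_faithful_on_cyclic abG sHG cycH.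
have phi_neq1 x : x \in <<[set s1; s2]>>%g -> x != 1%g -> phi x != 1.
  by move=> Hx; apply: contra => /eqP/(phi_faithful x Hx)->.
have Hs1 : s1 \in <<[set s1; s2]>>%g by rewrite mem_gen ?set21.
have Hs2 : s2 \in <<[set s1; s2]>>%g by rewrite mem_gen ?set22.
have [k []] : exists k, [/\ ~~ (#[tau]%g %| k), ~~ (#[s1]%g %| k.+1)
                           & ~~ (#[s2]%g %| k.+1)]%N.
  by apply: exists_notdvd_shift; rewrite ?order_gt1.
rewrite !order_dvdn => tau_k s1_k s2_k.
have Gs x : x \in <<[set s1; s2]>>%g -> x \in G := subsetP sHG x.
exists phi, (phi ^+ k); rewrite rpredX // !exp_cfunE ?Gs //.
rewrite -!exprS -!lin_charX ?Gs //.
by split; rewrite ?phi_neq1 ?groupX.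
Qed.

Theorem lemma4p13 (gT : finGroupType) (G : {group gT}) (s1 s2 tau : gT) :
  abelian G -> s1 \in G -> s2 \in G -> tau \in G ->
  s1 != 1%g -> s2 != 1%g -> tau != 1%g ->
  (2 < #[tau]%g)%N ->
  tau \in <<[set s1; s2]>>%g ->
  (gen_rank_is <<[set s1; s2]>>%g 2 ->
     exists (phi1 phi2 chi : 'CF(G)),
       [/\ [/\ phi1 \is a linear_char, phi2 \is a linear_char & chi \is a linear_char],
           chi tau != 1,
           [/\ phi1 s1 != 1, phi2 s2 != 1, phi1 s2 = 1 & phi2 s1 = 1] &
           phi1 s1 * chi s1 != 1 /\ phi2 s2 * (chi s2)^* != 1]) /\
  (gen_rank_is <<[set s1; s2]>>%g 1 ->
     exists (phi chi : 'CF(G)),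
       [/\ phi \is a linear_char, chi \is a linear_char,
           chi tau != 1,
           phi s1 != 1 /\ phi s2 != 1 &
           phi s1 * chi s1 != 1 /\ phi s2 * chi s2 != 1]).
Proof.
move=> abG Gs1 Gs2 _ s1_nt s2_nt _ tau_gt2 Htau; split=> [rank2 | rank1].
  apply: independent_pair_lin_chars => //; first exact: gen_rank2_notin_cycle.
  by apply: gen_rank2_notin_cycle; rewrite setUC.
exact: cyclic_pair_lin_chars (gen_rank1_cyclic rank1) s1_nt s2_nt Htau tau_gt2.
Qed.
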